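(* Consider the connections $\Gamma_1^1$, $\Gamma_2^1(c)$ and $\Gamma_3^1(c)$ for $c\notin\{0,-1\}$, $\Gamma_4^1(c)$ and $\Gamma_5^1(c)$ for $c\in\mathbb R$. Two of these are locally affinely equivalent if and only if one of the following holds: (1) both belong to $\{\Gamma_1^1\}\cup\{\Gamma_4^1(c):c\in\mathbb R\}$ (all of these are mutually affinely equivalent); (2) they are $\Gamma_i^1(c)$ and $\Gamma_j^1(\tilde c)$ with $i,j\in\{2,3\}$ and $c=\tilde c$ or $c=-1-\tilde c$; (3) they are $\Gamma_5^1(c)$ and $\Gamma_5^1(\tilde c)$ with $c=\pm\tilde c$.
   Context: A torsion-free connection has Christoffel symbols $\nabla_{\partial_{x^i}}\partial_{x^j}=\Gamma_{ij}^k\partial_{x^k}$. For real constants, $\Gamma(a,b,c,d,e,f)$ denotes the connection on $\mathbb R^2$ with constant Christoffel symbols $\Gamma_{11}^1=a$, $\Gamma_{11}^2=b$, $\Gamma_{12}^1=\Gamma_{21}^1=c$, $\Gamma_{12}^2=\Gamma_{21}^2=d$, $\Gamma_{22}^1=e$, $\Gamma_{22}^2=f$ (Type $\mathcal A$ connections). Two connections $\nabla,\tilde\nabla$ on $\mathbb R^2$ are (locally) affinely equivalent if there exist open sets $U,V\subset\mathbb R^2$ and a diffeomorphism $T:U\to V$ with $T^*\tilde\nabla=\nabla$ on $U$. The specific connections: $\Gamma_1^1:=\Gamma(-1,0,1,0,0,2)$; $\Gamma_2^1(c):=\Gamma(-1,0,c,0,0,1+2c)$; $\Gamma_3^1(c):=\Gamma(0,0,c,0,0,1+2c)$;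 $\Gamma_4^1(c):=\Gamma(0,0,1,0,c,2)$; $\Gamma_5^1(c):=\Gamma(1,0,0,0,1+c^2,2c)$. *)

From Stdlib Require Import Reals.
Open Scope R_scope.

Definition pt := (R * R)%type.
Definition dist2 (p q : pt) : R := Rmax (Rabs (fst p - fst q)) (Rabs (snd p - snd q)).

Definition is_open (U : pt -> Prop) : Prop :=
  forall p, U p -> exists r, 0 < r /\ forall q, dist2 q p < r -> U q.

Inductive idx := I1 | I2.
Definition sum2 (f : idx -> R) : R := f I1 + f I2.

Definition coord (k : idx) (p : pt) : R := match k with I1 => fst p | I2 => snd p end.
Definition comp (T : pt -> pt) (k : idx) : pt -> R := fun p => coord k (T p).

Definition is_partial (U : pt -> Prop) (f g : pt -> R) (i : idx) : Prop :=
  forall p, U p ->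
    match i with
    | I1 => derivable_pt_lim (fun t => f (t, snd p)) (fst p) (g p)
    | I2 => derivable_pt_lim (fun t => f (fst p, t)) (snd p) (g p)
    end.

Definition cont_on (U : pt -> Prop) (f : pt -> R) : Prop :=
  forall p, U p -> forall eps, 0 < eps ->
    exists delta, 0 < delta /\ forall q, U q -> dist2 q p < delta -> Rabs (f q - f p) < eps.

Fixpoint Cn (n : nat) (U : pt -> Prop) (f : pt -> R) : Prop :=
  match n with
  | O => cont_on U f
  | S m => cont_on U f /\ forall i, exists g, is_partial U f g i /\ Cn m U g
  end.

Definition smooth_on (U : pt -> Prop) (f : pt -> R) : Prop := forall n, Cn n U f.

Definition diffeo (U V : pt -> Prop) (T : pt -> pt) : Prop :=
  (forall p, U p -> V (T p)) /\
  exists S : pt -> pt,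
    (forall q, V q -> U (S q)) /\
    (forall p, U p -> S (T p) = p) /\
    (forall q, V q -> T (S q) = q) /\
    (forall k, smooth_on U (comp T k)) /\
    (forall k, smooth_on V (comp S k)).

(** Type A connections Gamma(a,b,c,d,e,f) on R^2 (constant Christoffel symbols). *)
Record conn := mkConn { ga : R; gb : R; gc : R; gd : R; ge : R; gf : R }.

(** chr G i j k = Gamma_{ij}^k. *)
Definition chr (G : conn) (i j k : idx) : R :=
  match i, j, k with
  | I1, I1, I1 => ga G
  | I1, I1, I2 => gb G
  | I1, I2, I1 | I2, I1, I1 => gc G
  | I1, I2, I2 | I2, I1, I2 => gd G
  | I2, I2, I1 => ge G
  | I2, I2, I2 => gf G
  end.

(** T^* Gt = G on U, written in coordinates:
    d_i d_j T^k + Gt_{ab}^k (T x) d_i T^a d_j T^b = G_{ij}^l d_l T^k. *)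
Definition pullback_eq (U : pt -> Prop) (T : pt -> pt) (G Gt : conn) : Prop :=
  exists (D : idx -> idx -> pt -> R) (DD : idx -> idx -> idx -> pt -> R),
    (forall k i, is_partial U (comp T k) (D k i) i) /\
    (forall k i j, is_partial U (D k j) (DD k i j) i) /\
    (forall p, U p -> forall i j k,
       DD k i j p + sum2 (fun a => sum2 (fun b => chr Gt a b k * D a i p * D b j p))
       = sum2 (fun l => chr G i j l * D k l p)).

Definition affinely_equiv (G Gt : conn) : Prop :=
  exists (U V : pt -> Prop) (T : pt -> pt),
    is_open U /\ is_open V /\ (exists p, U p) /\ diffeo U V T /\ pullback_eq U T G Gt.

Definition Gamma11 : conn := mkConn (-1) 0 1 0 0 2.
Definition Gamma21 (c : R) : conn := mkConn (-1) 0 c 0 0 (1 + 2 * c).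
Definition Gamma31 (c : R) : conn := mkConn 0 0 c 0 0 (1 + 2 * c).
Definition Gamma41 (c : R) : conn := mkConn 0 0 1 0 c 2.
Definition Gamma51 (c : R) : conn := mkConn 1 0 0 0 (1 + c ^ 2) (2 * c).

Inductive label := L1 | L2 (c : R) | L3 (c : R) | L4 (c : R) | L5 (c : R).

Definition conn_of (l : label) : conn :=
  match l with
  | L1 => Gamma11 | L2 c => Gamma21 c | L3 c => Gamma31 c
  | L4 c => Gamma41 c | L5 c => Gamma51 c
  end.

Definition admissible (l : label) : Prop :=
  match l with
  | L2 c | L3 c => c <> 0 /\ c <> -1
  | _ => True
  end.

Definition in14 (l : label) : Prop := l = L1 \/ exists c, l = L4 c.
Definition is23 (l : label) (c : R) : Prop := l = L2 c \/ l = L3 c.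

Definition equiv_cond (l m : label) : Prop :=
  (in14 l /\ in14 m) \/
  (exists c ct, is23 l c /\ is23 m ct /\ (c = ct \/ c = -1 - ct)) \/
  (exists c ct, l = L5 c /\ m = L5 ct /\ (c = ct \/ c = - ct)).

From Pilot Require Import Defs.
From Stdlib Require Import Reals Lra Psatz.
From Coquelicot Require Import Coquelicot.
Open Scope R_scope.

(* All five families have Γ_11^2 = Γ_12^2 = 0. For such connections the pullback equation of
   an affine equivalence T expresses the second derivatives of T as polynomials in its
   Jacobian, and equating the two mixed third derivatives (Schwarz) forces ∂_x T^2 = 0, since
   ρ_22 = a e + c f - c^2 ≠ 0; then, at a point where ∂_x T^1 ≠ 0 (one exists as T is
   injective), it shows that ρ_22 and
   Γ_22^2 = f scale by s^2 and s, with s = ∂_y T^2. Hence the sign of f^2 - 4 ρ_22 (zero on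
   Γ_1^1 and Γ_4^1, positive on Γ_2^1 and Γ_3^1, negative on Γ_5^1) is invariant, and inside
   the last two classes s^2 = 1, so ρ_22 = c^2 + c resp. 1 + c^2 is invariant: this is
   exactly the list. Conversely every listed equivalence is an explicit elementary
   diffeomorphism, e.g. (x, y) ↦ (-e^(-x), y) from Γ_2^1(c) to Γ_3^1(c) and
   (x, y) ↦ (x + y, -y) from Γ_2^1(-1-c) to Γ_2^1(c). *)

Lemma locally_2d_of_open (U : pt -> Prop) (P : R -> R -> Prop) (p : pt) :
  is_open U -> U p -> (forall u v, U (u, v) -> P u v) -> locally_2d P (fst p) (snd p).
Proof.
  intros HU Hp HP. destruct (HU p Hp) as [r [Hr Hball]].
  exists (mkposreal r Hr). intros u v Hu Hv. apply HP, Hball.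
  unfold dist2; simpl. now apply Rmax_lub_lt.
Qed.

Lemma locally_hor_of_open (U : pt -> Prop) (u v : R) :
  is_open U -> U (u, v) -> locally u (fun z => U (z, v)).
Proof.
  intros HU Huv.
  destruct (locally_2d_of_open U (fun u' v' => U (u', v')) (u, v) HU Huv (fun _ _ H => H))
    as [d Hd].
  exists d. intros z Hz. apply Hd; [exact Hz|].
  simpl. rewrite Rminus_eq_0, Rabs_R0. apply cond_pos.
Qed.

Lemma locally_vert_of_open (U : pt -> Prop) (u v : R) :
  is_open U -> U (u, v) -> locally v (fun z => U (u, z)).
Proof.
  intros HU Huv.
  destruct (locally_2d_of_open U (fun u' v' => U (u', v')) (u, v) HU Huv (fun _ _ H => H))
    as [d Hd].
  exists d. intros z Hz. apply Hd; [|exact Hz].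
  simpl. rewrite Rminus_eq_0, Rabs_R0. apply cond_pos.
Qed.

Lemma cont_on_of_continuity_2d (U : pt -> Prop) (f : pt -> R) :
  (forall p, U p -> continuity_2d_pt (fun u v => f (u, v)) (fst p) (snd p)) -> cont_on U f.
Proof.
  intros Hf [x y] Hp eps He. destruct (Hf (x, y) Hp (mkposreal eps He)) as [d Hd].
  exists d. split; [apply cond_pos|]. intros [u v] _ Hq.
  unfold dist2 in Hq; simpl in Hq.
  apply Hd; [exact (Rle_lt_trans _ _ _ (Rmax_l _ _) Hq)
            | exact (Rle_lt_trans _ _ _ (Rmax_r _ _) Hq)].
Qed.

Lemma continuity_2d_of_cont_on (U : pt -> Prop) (f : pt -> R) (p : pt) :
  is_open U -> cont_on U f -> U p -> continuity_2d_pt (fun u v => f (u, v)) (fst p) (snd p).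
Proof.
  intros HU Hf Hp eps. destruct (Hf p Hp eps (cond_pos eps)) as [d [Hd Hclose]].
  destruct (locally_2d_of_open U (fun u v => U (u, v)) p HU Hp (fun _ _ H => H)) as [r Hr].
  assert (Hdr : 0 < Rmin d r) by (apply Rmin_pos; [exact Hd | apply cond_pos]).
  exists (mkposreal _ Hdr). simpl. intros u v Hu Hv. destruct p as [x y].
  apply Hclose.
  - apply Hr; eapply Rlt_le_trans; eauto using Rmin_r.
  - apply Rmax_lub_lt; eapply Rlt_le_trans; eauto using Rmin_l.
Qed.

Lemma cont_on_ext (U : pt -> Prop) (f g : pt -> R) :
  (forall p, U p -> f p = g p) -> cont_on U f -> cont_on U g.
Proof.
  intros E Hf p Hp eps He. destruct (Hf p Hp eps He) as [d [Hd H]].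
  exists d; split; [exact Hd|]. intros q Hq Hqp. rewrite <- !E; auto.
Qed.

Lemma Derive_partial1 (U : pt -> Prop) (f g : pt -> R) (u v : R) :
  is_partial U f g I1 -> U (u, v) -> Derive (fun t => f (t, v)) u = g (u, v).
Proof. intros Hg Huv. apply is_derive_unique, is_derive_Reals, (Hg (u, v) Huv). Qed.

Lemma Derive_partial2 (U : pt -> Prop) (f g : pt -> R) (u v : R) :
  is_partial U f g I2 -> U (u, v) -> Derive (fun t => f (u, t)) v = g (u, v).
Proof. intros Hg Huv. apply is_derive_unique, is_derive_Reals, (Hg (u, v) Huv). Qed.

Lemma partial_unique (U : pt -> Prop) (f g1 g2 : pt -> R) (i : idx) (p : pt) :
  U p -> is_partial U f g1 i -> is_partial U f g2 i -> g1 p = g2 p.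
Proof.
  intros Hp H1 H2. specialize (H1 p Hp). specialize (H2 p Hp).
  destruct i; eapply uniqueness_limite; eauto.
Qed.

Lemma cont_on_partial_of_smooth (U : pt -> Prop) (f g : pt -> R) (i : idx) :
  smooth_on U f -> is_partial U f g i -> cont_on U g.
Proof.
  intros Hf Hg. destruct (Hf 1%nat) as [_ Hpartials]. destruct (Hpartials i) as [g' [Hg' Hc]].
  apply (cont_on_ext U g'); [|exact Hc]. intros p Hp. exact (partial_unique U f g' g i p Hp Hg' Hg).
Qed.

Lemma const_of_partial1_eq0 (U : pt -> Prop) (f g : pt -> R) (x y r : R) :
  0 < r -> (forall t, Rabs (t - x) < r -> U (t, y)) ->
  is_partial U f g I1 -> (forall q, U q -> g q = 0) -> f (x + r / 2, y) = f (x, y).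
Proof.
  intros Hr Hline Hf Hg.
  assert (Hin : forall t, x <= t <= x + r / 2 -> U (t, y)).
  { intros t Ht. apply Hline. rewrite Rabs_right; lra. }
  destruct (MVT_cor2 (fun t => f (t, y)) (fun t => g (t, y)) x (x + r / 2)) as [c [Ec Hc]].
  - lra.
  - intros c Hc. exact (Hf (c, y) (Hin c Hc)).
  - rewrite (Hg (c, y)) in Ec by (apply Hin; lra). lra.
Qed.

Lemma partial_eq0_of_eq0 (U : pt -> Prop) (f g : pt -> R) (i : idx) (p : pt) :
  is_open U -> U p -> is_partial U f g i -> (forall q, U q -> f q = 0) -> g p = 0.
Proof.
  intros HU Hp Hg Hf. destruct p as [x y]. specialize (Hg (x, y) Hp).
  destruct i; cbn in Hg; apply (uniqueness_limite _ _ _ _ Hg), (is_derive_Reals _ _ 0);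
    apply (is_derive_ext_loc (fun _ => 0)); try exact (is_derive_const 0 _).
  - apply (filter_imp (fun t => U (t, y))); [|exact (locally_hor_of_open U x y HU Hp)].
    intros t Ht. symmetry. exact (Hf _ Ht).
  - apply (filter_imp (fun t => U (x, t))); [|exact (locally_vert_of_open U x y HU Hp)].
    intros t Ht. symmetry. exact (Hf _ Ht).
Qed.

Lemma is_derive_mixed21 (U : pt -> Prop) (f g2 h21 : pt -> R) (u v : R) :
  is_open U -> is_partial U f g2 I2 -> is_partial U g2 h21 I1 -> U (u, v) ->
  is_derive (fun z => Derive (fun t => f (z, t)) v) u (h21 (u, v)).
Proof.
  intros HU Hg2 Hh21 Huv. apply (is_derive_ext_loc (fun z => g2 (z, v))).
  - apply (filter_imp (fun z => U (z, v))); [|exact (locally_hor_of_open U u v HU Huv)].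
    intros z Hz. symmetry. exact (Derive_partial2 U f g2 z v Hg2 Hz).
  - apply is_derive_Reals, (Hh21 (u, v) Huv).
Qed.

Lemma is_derive_mixed12 (U : pt -> Prop) (f g1 h12 : pt -> R) (u v : R) :
  is_open U -> is_partial U f g1 I1 -> is_partial U g1 h12 I2 -> U (u, v) ->
  is_derive (fun z => Derive (fun t => f (t, z)) u) v (h12 (u, v)).
Proof.
  intros HU Hg1 Hh12 Huv. apply (is_derive_ext_loc (fun z => g1 (u, z))).
  - apply (filter_imp (fun z => U (u, z))); [|exact (locally_vert_of_open U u v HU Huv)].
    intros z Hz. symmetry. exact (Derive_partial1 U f g1 u z Hg1 Hz).
  - apply is_derive_Reals, (Hh12 (u, v) Huv).
Qed.

Lemma clairaut (U : pt -> Prop) (f g1 g2 h12 h21 : pt -> R) (p : pt) :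
  is_open U -> U p ->
  is_partial U f g1 I1 -> is_partial U f g2 I2 ->
  is_partial U g1 h12 I2 -> is_partial U g2 h21 I1 ->
  cont_on U h12 -> cont_on U h21 -> h12 p = h21 p.
Proof.
  intros HU Hp Hg1 Hg2 Hh12 Hh21 Ch12 Ch21.
  pose proof (fun u v => is_derive_mixed21 U f g2 h21 u v HU Hg2 Hh21) as D21.
  pose proof (fun u v => is_derive_mixed12 U f g1 h12 u v HU Hg1 Hh12) as D12.
  destruct p as [x y].
  rewrite <- (is_derive_unique _ _ _ (D12 x y Hp)), <- (is_derive_unique _ _ _ (D21 x y Hp)).
  symmetry. apply (Schwarz (fun u v => f (u, v))).
  - apply (locally_2d_of_open U _ (x, y) HU Hp). intros u v Huv. repeat split.
    + exists (g1 (u, v)). apply is_derive_Reals, (Hg1 (u, v) Huv).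
    + exists (g2 (u, v)). apply is_derive_Reals, (Hg2 (u, v) Huv).
    + exists (h21 (u, v)). exact (D21 u v Huv).
    + exists (h12 (u, v)). exact (D12 u v Huv).
  - apply (continuity_2d_pt_ext_loc (fun u v => h21 (u, v))).
    + apply (locally_2d_of_open U _ (x, y) HU Hp).
      intros u v Huv. symmetry. apply is_derive_unique, D21, Huv.
    + exact (continuity_2d_of_cont_on U h21 (x, y) HU Ch21 Hp).
  - apply (continuity_2d_pt_ext_loc (fun u v => h12 (u, v))).
    + apply (locally_2d_of_open U _ (x, y) HU Hp).
      intros u v Huv. symmetry. apply is_derive_unique, D12, Huv.
    + exact (continuity_2d_of_cont_on U h12 (x, y) HU Ch12 Hp).
Qed.

(** * Necessity: invariants of an affine equivalence *)

(* Polynomials in the Jacobian entries [JVar k l] = ∂_l T^k; [jderiv H i] differentiates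
   them formally, [H k i l] being the derivative of the entry (k, l) in direction i. *)
Inductive jpoly :=
  | JCst (r : R) | JVar (k l : idx) | JAdd (a b : jpoly) | JMul (a b : jpoly).

Fixpoint jeval (D : idx -> idx -> pt -> R) (e : jpoly) (q : pt) : R :=
  match e with
  | JCst r => r
  | JVar k l => D k l q
  | JAdd a b => jeval D a q + jeval D b q
  | JMul a b => jeval D a q * jeval D b q
  end.

Fixpoint jderiv (H : idx -> idx -> idx -> jpoly) (i : idx) (e : jpoly) : jpoly :=
  match e with
  | JCst _ => JCst 0
  | JVar k l => H k i l
  | JAdd a b => JAdd (jderiv H i a) (jderiv H i b)
  | JMul a b => JAdd (JMul (jderiv H i a) b) (JMul a (jderiv H i b))
  end.

Lemma is_partial_jeval (U : pt -> Prop) (D : idx -> idx -> pt -> R)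
    (H : idx -> idx -> idx -> jpoly) :
  (forall k i l, is_partial U (D k l) (jeval D (H k i l)) i) ->
  forall e i, is_partial U (jeval D e) (jeval D (jderiv H i e)) i.
Proof.
  intros HD e i. induction e; intros [x y] Hp; destruct i; cbn.
  - apply derivable_pt_lim_const.
  - apply derivable_pt_lim_const.
  - exact (HD k I1 l (x, y) Hp).
  - exact (HD k I2 l (x, y) Hp).
  - exact (derivable_pt_lim_plus _ _ _ _ _ (IHe1 _ Hp) (IHe2 _ Hp)).
  - exact (derivable_pt_lim_plus _ _ _ _ _ (IHe1 _ Hp) (IHe2 _ Hp)).
  - exact (derivable_pt_lim_mult _ _ _ _ _ (IHe1 _ Hp) (IHe2 _ Hp)).
  - exact (derivable_pt_lim_mult _ _ _ _ _ (IHe1 _ Hp) (IHe2 _ Hp)).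
Qed.

Lemma cont_on_jeval (U : pt -> Prop) (D : idx -> idx -> pt -> R) :
  is_open U -> (forall k l, cont_on U (D k l)) -> forall e, cont_on U (jeval D e).
Proof.
  intros HU HD e. apply cont_on_of_continuity_2d. intros p Hp.
  induction e; cbn.
  - apply continuity_2d_pt_const.
  - exact (continuity_2d_of_cont_on U (D k l) p HU (HD k l) Hp).
  - now apply continuity_2d_pt_plus.
  - now apply continuity_2d_pt_mult.
Qed.

Definition jsum2 (f : idx -> jpoly) : jpoly := JAdd (f I1) (f I2).

(* The pullback equation solved for ∂_i ∂_j T^k. *)
Definition hess_poly (G Gt : conn) (k i j : idx) : jpoly :=
  JAdd (jsum2 (fun l => JMul (JCst (chr G i j l)) (JVar k l)))
       (JMul (JCst (-1)) (jsum2 (fun a => jsum2 (fun b =>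
          JMul (JMul (JCst (chr Gt a b k)) (JVar a i)) (JVar b j))))).

(* The Ricci component ρ_22 of a connection with Γ_11^2 = Γ_12^2 = 0. *)
Definition ricci22 (G : conn) : R := ga G * ge G + gc G * gf G - gc G ^ 2.

Section NormalizedEquivalence.

Variables (G Gt : conn) (U : pt -> Prop) (D : idx -> idx -> pt -> R).
Hypothesis open_U : is_open U.
Hypothesis cont_D : forall k l, cont_on U (D k l).
Hypothesis partial_D : forall k i l, is_partial U (D k l) (jeval D (hess_poly G Gt k i l)) i.

Let hess := hess_poly G Gt.

(* Both sides are the third derivative ∂_1 ∂_2 ∂_j T^k. *)
Lemma hess_compat (k j : idx) (q : pt) : U q ->
  jeval D (jderiv hess I2 (hess k I1 j)) q = jeval D (jderiv hess I1 (hess k I2 j)) q.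
Proof.
  intros Hq. pose proof (is_partial_jeval U D hess partial_D) as Hpoly.
  apply (clairaut U (D k j) (jeval D (hess k I1 j)) (jeval D (hess k I2 j)));
    auto using cont_on_jeval.
Qed.

Hypotheses (b_G : gb G = 0) (d_G : gd G = 0) (b_Gt : gb Gt = 0) (d_Gt : gd Gt = 0).
Hypothesis ricci22_G : ricci22 G <> 0.

Lemma jac21_eq0 (q : pt) : U q -> D I2 I1 q = 0.
Proof.
  intros Hq. pose proof (hess_compat I2 I2 q Hq) as E.
  unfold hess, hess_poly, jsum2 in E. cbn in E. rewrite b_G, d_G, b_Gt, d_Gt in E.
  assert (ricci22 G * D I2 I1 q = 0) as Z by (unfold ricci22; lra).
  destruct (Rmult_integral _ _ Z); [contradiction | assumption].
Qed.

Lemma jac11_ricci22 (q : pt) : U q ->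
  D I1 I1 q * (ricci22 G - ricci22 Gt * D I2 I2 q ^ 2) = 0.
Proof.
  intros Hq. pose proof (hess_compat I1 I2 q Hq) as E.
  unfold hess, hess_poly, jsum2 in E. cbn in E.
  rewrite b_G, d_G, b_Gt, d_Gt, (jac21_eq0 q Hq) in E.
  unfold ricci22. lra.
Qed.

Lemma jac_scaling (p : pt) : U p -> D I1 I1 p <> 0 ->
  D I2 I2 p <> 0 /\ ricci22 G = ricci22 Gt * D I2 I2 p ^ 2 /\ gf G = gf Gt * D I2 I2 p.
Proof.
  intros Hp H11.
  set (s := D I2 I2 p).
  assert (Hricci : ricci22 G = ricci22 Gt * s ^ 2).
  { destruct (Rmult_integral _ _ (jac11_ricci22 p Hp)); [contradiction | unfold s; lra]. }
  assert (Hs : s <> 0) by (intros S0; apply ricci22_G; rewrite Hricci, S0; ring).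
  split; [exact Hs|]. split; [exact Hricci|].
  (* Differentiate the identity of [jac11_ricci22] in y. *)
  set (e := JMul (JVar I1 I1) (JAdd (JCst (ricci22 G))
              (JMul (JCst (- ricci22 Gt)) (JMul (JVar I2 I2) (JVar I2 I2))))).
  assert (E : jeval D (jderiv hess I2 e) p = 0).
  { apply (partial_eq0_of_eq0 U (jeval D e) _ I2 p open_U Hp).
    - exact (is_partial_jeval U D hess partial_D e I2).
    - intros q Hq. cbn. rewrite <- (jac11_ricci22 q Hq). ring. }
  unfold e, hess, hess_poly, jsum2 in E. cbn in E.
  rewrite ?b_G, ?d_G, ?b_Gt, ?d_Gt, (jac21_eq0 p Hp) in E. fold s in E. rewrite Hricci in E.
  assert (Z : (ricci22 Gt * D I1 I1 p * s ^ 2) * (gf G - gf Gt * s) = 0) by lra.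
  assert (ricci22 Gt <> 0) by (intros R0; apply ricci22_G; rewrite Hricci, R0; ring).
  assert (ricci22 Gt * D I1 I1 p * s ^ 2 <> 0)
    by (repeat apply Rmult_integral_contrapositive_currified; auto using pow_nonzero).
  destruct (Rmult_integral _ _ Z); [contradiction | lra].
Qed.

End NormalizedEquivalence.

Lemma injective_partial1_neq0 (U : pt -> Prop) (T S : pt -> pt) (D : idx -> pt -> R) (p0 : pt) :
  is_open U -> U p0 -> (forall p, U p -> S (T p) = p) ->
  (forall k, is_partial U (Defs.comp T k) (D k) I1) ->
  exists p, U p /\ (D I1 p <> 0 \/ D I2 p <> 0).
Proof.
  intros HU Hp0 HST HD. apply Classical_Prop.NNPP. intros Hno.
  assert (Z : forall k q, U q -> D k q = 0).
  { intros k q Hq. apply Classical_Prop.NNPP. intros Hk. apply Hno.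
    exists q. split; [exact Hq|]. destruct k; auto. }
  destruct p0 as [x y]. destruct (locally_hor_of_open U x y HU Hp0) as [r Hr].
  assert (Hconst : forall k, Defs.comp T k (x + r / 2, y) = Defs.comp T k (x, y)).
  { intros k. exact (const_of_partial1_eq0 U _ _ x y r (cond_pos r) Hr (HD k) (Z k)). }
  assert (ET : T (x + r / 2, y) = T (x, y)).
  { rewrite (surjective_pairing (T (x + r / 2, y))), (surjective_pairing (T (x, y))).
    exact (f_equal2 pair (Hconst I1) (Hconst I2)). }
  assert (E : (x + r / 2, y) = (x, y)).
  { rewrite <- (HST _ Hp0), <- ET. symmetry. apply HST, Hr.
    change (Rabs (x + r / 2 - x) < r). pose proof (cond_pos r).
    rewrite Rabs_right; lra. }
  injection E. pose proof (cond_pos r). lra.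
Qed.

Lemma affinely_equiv_scaling (G Gt : conn) :
  gb G = 0 -> gd G = 0 -> gb Gt = 0 -> gd Gt = 0 -> ricci22 G <> 0 ->
  affinely_equiv G Gt ->
  exists s, s <> 0 /\ ricci22 G = ricci22 Gt * s ^ 2 /\ gf G = gf Gt * s.
Proof.
  intros b_G d_G b_Gt d_Gt Hricci
    [U [V [T [HU [_ [[p0 Hp0] [[_ [S [_ [HST [_ [HsT _]]]]]] [D [DD [HD [HDD Heq]]]]]]]]]]].
  assert (Hhess : forall k i j q, U q -> DD k i j q = jeval D (hess_poly G Gt k i j) q).
  { intros k i j q Hq. specialize (Heq q Hq i j k). unfold sum2 in Heq. cbv beta in Heq.
    unfold hess_poly, jsum2. cbn [jeval]. rewrite <- Heq. ring. }
  assert (partial_D : forall k i l, is_partial U (D k l) (jeval D (hess_poly G Gt k i l)) i).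
  { intros k i l q Hq. rewrite <- (Hhess k i l q Hq). exact (HDD k i l q Hq). }
  assert (cont_D : forall k l, cont_on U (D k l)).
  { intros k l. exact (cont_on_partial_of_smooth U _ _ l (HsT k) (HD k l)). }
  destruct (injective_partial1_neq0 U T S (fun k => D k I1) p0 HU Hp0 HST (fun k => HD k I1))
    as [p [Hp [H11 | H21]]].
  - exists (D I2 I2 p).
    exact (jac_scaling G Gt U D HU cont_D partial_D b_G d_G b_Gt d_Gt Hricci p Hp H11).
  - exfalso. exact (H21 (jac21_eq0 G Gt U D HU cont_D partial_D b_G d_G b_Gt d_Gt Hricci p Hp)).
Qed.

Lemma ricci22_admissible (l : label) : admissible l -> ricci22 (conn_of l) <> 0.
Proof.
  destruct l as [|c|c|c|c]; unfold ricci22; cbn; intros Hl; try nra.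
  all: destruct Hl as [Hc0 Hc1]; intros E.
  all: apply (Rmult_integral_contrapositive_currified c (c + 1) Hc0); [lra | nra].
Qed.

Lemma quadratic_roots_sum (c c' : R) : c ^ 2 + c = c' ^ 2 + c' -> c = c' \/ c = -1 - c'.
Proof.
  intros E. assert (Z : (c - c') * (c + c' + 1) = 0) by nra.
  destruct (Rmult_integral _ _ Z); [left | right]; lra.
Qed.

Lemma square_roots (c c' : R) : c ^ 2 = c' ^ 2 -> c = c' \/ c = - c'.
Proof.
  intros E. assert (Z : (c - c') * (c + c') = 0) by nra.
  destruct (Rmult_integral _ _ Z); [left | right]; lra.
Qed.

Lemma label_equiv_necessary (l m : label) :
  admissible l -> admissible m -> affinely_equiv (conn_of l) (conn_of m) -> equiv_cond l m.
Proof.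
  intros Hl Hm Hequiv.
  assert (Hb : forall n, gb (conn_of n) = 0) by (intros []; reflexivity).
  assert (Hd : forall n, gd (conn_of n) = 0) by (intros []; reflexivity).
  destruct (affinely_equiv_scaling _ _ (Hb l) (Hd l) (Hb m) (Hd m)
              (ricci22_admissible l Hl) Hequiv) as [s [Hs [Er Ef]]].
  (* f^2 - 4 ρ_22 is 0 on Γ_1^1 and Γ_4^1, 1 on Γ_2^1 and Γ_3^1, and -4 on Γ_5^1. *)
  assert (Edisc : gf (conn_of l) ^ 2 - 4 * ricci22 (conn_of l)
                  = (gf (conn_of m) ^ 2 - 4 * ricci22 (conn_of m)) * s ^ 2)
    by (rewrite Er, Ef; ring).
  assert (Hs2 : 0 < s ^ 2) by (apply pow2_gt_0; exact Hs).
  unfold equiv_cond, in14, is23.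
  destruct l as [|c|c|c|c], m as [|c'|c'|c'|c'];
    unfold ricci22 in Er, Edisc;
    cbn [conn_of Gamma11 Gamma21 Gamma31 Gamma41 Gamma51 ga gc ge gf] in Er, Edisc.
  all: try solve [exfalso; nra].
  all: try solve [left; split; solve [left; reflexivity | right; eexists; reflexivity]].
  all: assert (Hs1 : s ^ 2 = 1) by nra; rewrite Hs1 in Er.
  all: first
    [ right; left; exists c, c'; split; [now (left + right)|]; split; [now (left + right)|];
      apply quadratic_roots_sum; nra
    | right; right; exists c, c'; split; [reflexivity|]; split; [reflexivity|];
      apply square_roots; nra ].
Qed.

(** * Sufficiency: explicit equivalences *)

(* Elementary expressions in the coordinates x, y with symbolic partial derivatives, so that
   maps built from them are smooth wherever they are [defined]. *)
Inductive sexpr :=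
  | ECst (r : R) | EX | EY
  | EAdd (a b : sexpr) | EMul (a b : sexpr)
  | EExp (a : sexpr) | ELn (a : sexpr) | EInv (a : sexpr).

Fixpoint eval (e : sexpr) (p : pt) : R :=
  match e with
  | ECst r => r
  | EX => fst p
  | EY => snd p
  | EAdd a b => eval a p + eval b p
  | EMul a b => eval a p * eval b p
  | EExp a => exp (eval a p)
  | ELn a => ln (eval a p)
  | EInv a => / eval a p
  end.

Fixpoint defined (e : sexpr) (p : pt) : Prop :=
  match e with
  | ECst _ | EX | EY => True
  | EAdd a b | EMul a b => defined a p /\ defined b p
  | EExp a => defined a p
  | ELn a => defined a p /\ 0 < eval a p
  | EInv a => defined a p /\ eval a p <> 0
  end.

Definition ENeg (a : sexpr) : sexpr := EMul (ECst (-1)) a.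

Fixpoint ederiv (i : idx) (e : sexpr) : sexpr :=
  match e with
  | ECst _ => ECst 0
  | EX => match i with I1 => ECst 1 | I2 => ECst 0 end
  | EY => match i with I1 => ECst 0 | I2 => ECst 1 end
  | EAdd a b => EAdd (ederiv i a) (ederiv i b)
  | EMul a b => EAdd (EMul (ederiv i a) b) (EMul a (ederiv i b))
  | EExp a => EMul (EExp a) (ederiv i a)
  | ELn a => EMul (ederiv i a) (EInv a)
  | EInv a => ENeg (EMul (ederiv i a) (EMul (EInv a) (EInv a)))
  end.

Lemma defined_ederiv (i : idx) (e : sexpr) (p : pt) : defined e p -> defined (ederiv i e) p.
Proof.
  induction e; cbn; intros W; try tauto; try (destruct i; cbn; tauto).
  destruct W as [Wa Hpos]. repeat split; auto. lra.
Qed.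

Definition slice (i : idx) (p : pt) (t : R) : pt :=
  match i with I1 => (t, snd p) | I2 => (fst p, t) end.

Lemma derivable_pt_lim_Rinv (f : R -> R) (x l : R) :
  derivable_pt_lim f x l -> f x <> 0 ->
  derivable_pt_lim (fun t => / f t) x (-1 * (l * (/ f x * / f x))).
Proof.
  intros Hf Hnz. apply is_derive_Reals.
  replace (-1 * (l * (/ f x * / f x))) with (- l / f x ^ 2) by (field; exact Hnz).
  apply is_derive_inv; [apply is_derive_Reals|]; assumption.
Qed.

Lemma derivable_eval_slice (i : idx) (e : sexpr) (p : pt) (t0 : R) : defined e (slice i p t0) ->
  derivable_pt_lim (fun t => eval e (slice i p t)) t0 (eval (ederiv i e) (slice i p t0)).
Proof.
  induction e; cbn; intros W.
  - apply derivable_pt_lim_const.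
  - destruct i; [apply derivable_pt_lim_id | apply derivable_pt_lim_const].
  - destruct i; [apply derivable_pt_lim_const | apply derivable_pt_lim_id].
  - exact (derivable_pt_lim_plus _ _ _ _ _ (IHe1 (proj1 W)) (IHe2 (proj2 W))).
  - exact (derivable_pt_lim_mult _ _ _ _ _ (IHe1 (proj1 W)) (IHe2 (proj2 W))).
  - exact (derivable_pt_lim_comp _ exp _ _ _ (IHe W) (derivable_pt_lim_exp _)).
  - rewrite Rmult_comm.
    exact (derivable_pt_lim_comp _ ln _ _ _ (IHe (proj1 W)) (derivable_pt_lim_ln _ (proj2 W))).
  - exact (derivable_pt_lim_Rinv _ _ _ (IHe (proj1 W)) (proj2 W)).
Qed.

Lemma is_partial_eval (U : pt -> Prop) (e : sexpr) (i : idx) :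
  (forall p, U p -> defined e p) -> is_partial U (eval e) (eval (ederiv i e)) i.
Proof.
  intros W [x y] Hp.
  destruct i; [exact (derivable_eval_slice I1 e (x, y) x (W _ Hp))
              | exact (derivable_eval_slice I2 e (x, y) y (W _ Hp))].
Qed.

Lemma continuity_eval (e : sexpr) (p : pt) : defined e p ->
  continuity_2d_pt (fun u v => eval e (u, v)) (fst p) (snd p).
Proof.
  destruct p as [x y]. induction e; cbn; intros W.
  - apply continuity_2d_pt_const.
  - apply continuity_2d_pt_id1.
  - apply continuity_2d_pt_id2.
  - apply continuity_2d_pt_plus; tauto.
  - apply continuity_2d_pt_mult; tauto.
  - apply continuity_1d_2d_pt_comp; [|tauto].
    apply derivable_continuous_pt. exact (exist _ _ (derivable_pt_lim_exp _)).
  - apply continuity_1d_2d_pt_comp; [|tauto].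
    apply derivable_continuous_pt. exact (exist _ _ (derivable_pt_lim_ln _ (proj2 W))).
  - apply continuity_2d_pt_inv; tauto.
Qed.

Lemma smooth_on_eval (U : pt -> Prop) (e : sexpr) :
  (forall p, U p -> defined e p) -> smooth_on U (eval e).
Proof.
  intros W n. revert e W. induction n as [|n IHn]; intros e W; cbn.
  - apply cont_on_of_continuity_2d. intros p Hp. exact (continuity_eval e p (W p Hp)).
  - split.
    + apply cont_on_of_continuity_2d. intros p Hp. exact (continuity_eval e p (W p Hp)).
    + intros i. exists (eval (ederiv i e)). split.
      * exact (is_partial_eval U e i W).
      * apply IHn. intros p Hp. exact (defined_ederiv i e p (W p Hp)).
Qed.

Lemma is_open_eval_neg (g : sexpr) : (forall p, defined g p) -> is_open (fun p => eval g p < 0).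
Proof.
  intros W [x y] Hp.
  assert (Hpos : 0 < - eval g (x, y)) by lra.
  destruct (continuity_eval g (x, y) (W _) (mkposreal _ Hpos)) as [d Hd].
  exists d. split; [apply cond_pos|]. intros [u v] Huv.
  unfold dist2 in Huv; cbn in Huv, Hd.
  specialize (Hd u v (Rle_lt_trans _ _ _ (Rmax_l _ _) Huv) (Rle_lt_trans _ _ _ (Rmax_r _ _) Huv)).
  pose proof (Rle_abs (eval g (u, v) - eval g (x, y))). lra.
Qed.

Lemma is_open_full : is_open (fun _ => True).
Proof. intros p _. exists 1. split; [lra | auto]. Qed.

Record sexpr_diffeo (U V : pt -> Prop) (t1 t2 s1 s2 : sexpr) : Prop := {
  sd_open_dom : is_open U;
  sd_open_cod : is_open V;
  sd_nonempty : exists p, U p;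
  sd_defined_fwd : forall p, U p -> defined t1 p /\ defined t2 p;
  sd_defined_bwd : forall q, V q -> defined s1 q /\ defined s2 q;
  sd_maps_fwd : forall p, U p -> V (eval t1 p, eval t2 p);
  sd_maps_bwd : forall q, V q -> U (eval s1 q, eval s2 q);
  sd_inv_fwd : forall p, U p ->
    eval s1 (eval t1 p, eval t2 p) = fst p /\ eval s2 (eval t1 p, eval t2 p) = snd p;
  sd_inv_bwd : forall q, V q ->
    eval t1 (eval s1 q, eval s2 q) = fst q /\ eval t2 (eval s1 q, eval s2 q) = snd q }.

Lemma sexpr_diffeo_sym {U V : pt -> Prop} {t1 t2 s1 s2 : sexpr} :
  sexpr_diffeo U V t1 t2 s1 s2 -> sexpr_diffeo V U s1 s2 t1 t2.
Proof.
  intros [HU HV [p Hp] WT WS TUV SVU ST TS].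
  split; auto. exists (eval t1 p, eval t2 p). exact (TUV p Hp).
Qed.

Lemma sexpr_diffeo_full (t1 t2 s1 s2 : sexpr) :
  (forall p, defined t1 p /\ defined t2 p) -> (forall q, defined s1 q /\ defined s2 q) ->
  (forall p, eval s1 (eval t1 p, eval t2 p) = fst p /\ eval s2 (eval t1 p, eval t2 p) = snd p) ->
  (forall q, eval t1 (eval s1 q, eval s2 q) = fst q /\ eval t2 (eval s1 q, eval s2 q) = snd q) ->
  sexpr_diffeo (fun _ => True) (fun _ => True) t1 t2 s1 s2.
Proof.
  intros WT WS ST TS. split; auto using is_open_full. exists (0, 0). exact I.
Qed.

Definition pair_at (t1 t2 : sexpr) (k : idx) : sexpr := match k with I1 => t1 | I2 => t2 end.

Lemma affinely_equiv_of_sexpr {G Gt : conn} {U V : pt -> Prop} {t1 t2 s1 s2 : sexpr} :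
  sexpr_diffeo U V t1 t2 s1 s2 ->
  (forall p, U p -> forall i j k,
     eval (ederiv i (ederiv j (pair_at t1 t2 k))) p
     + sum2 (fun a => sum2 (fun b =>
         chr Gt a b k * eval (ederiv i (pair_at t1 t2 a)) p * eval (ederiv j (pair_at t1 t2 b)) p))
     = sum2 (fun l => chr G i j l * eval (ederiv l (pair_at t1 t2 k)) p)) ->
  affinely_equiv G Gt.
Proof.
  intros [HU HV Hne WT WS TUV SVU ST TS] Hpull.
  assert (WT' : forall k p, U p -> defined (pair_at t1 t2 k) p) by (intros [|] p Hp; apply WT, Hp).
  exists U, V, (fun p => (eval t1 p, eval t2 p)). repeat split; auto.
  - exists (fun q => (eval s1 q, eval s2 q)). repeat split; auto.
    + intros p Hp. destruct (ST p Hp) as [E1 E2]. rewrite E1, E2. destruct p; reflexivity.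
    + intros q Hq. destruct (TS q Hq) as [E1 E2]. rewrite E1, E2. destruct q; reflexivity.
    + intros [|]; [exact (smooth_on_eval U t1 (WT' I1)) | exact (smooth_on_eval U t2 (WT' I2))].
    + intros [|]; apply smooth_on_eval; intros q Hq; apply WS, Hq.
  - exists (fun k i => eval (ederiv i (pair_at t1 t2 k))),
           (fun k i j => eval (ederiv i (ederiv j (pair_at t1 t2 k)))).
    split; [|split; [|exact Hpull]].
    + intros [|] i;
        [exact (is_partial_eval U t1 i (WT' I1)) | exact (is_partial_eval U t2 i (WT' I2))].
    + intros k i j. apply is_partial_eval. intros p Hp. exact (defined_ederiv j _ p (WT' k p Hp)).
Qed.

Ltac solve_pullback :=
  intros [x y] Hxy [|] [|] [|]; unfold sum2; cbn in *; field; lra.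

Lemma sexpr_diffeo_id : sexpr_diffeo (fun _ => True) (fun _ => True) EX EY EX EY.
Proof. apply sexpr_diffeo_full; cbn; auto. Qed.

Lemma sexpr_diffeo_flip_y : sexpr_diffeo (fun _ => True) (fun _ => True) EX (ENeg EY) EX (ENeg EY).
Proof. apply sexpr_diffeo_full; cbn; auto; intros [x y]; cbn; split; ring. Qed.

Lemma sexpr_diffeo_shear (c : R) : sexpr_diffeo (fun _ => True) (fun _ => True)
  (EAdd EX (EMul (ECst c) (EMul EY EY))) EY (EAdd EX (EMul (ECst (- c)) (EMul EY EY))) EY.
Proof. apply sexpr_diffeo_full; cbn; auto; intros [x y]; cbn; split; ring. Qed.

Lemma sexpr_diffeo_skew :
  sexpr_diffeo (fun _ => True) (fun _ => True) (EAdd EX EY) (ENeg EY) (EAdd EX EY) (ENeg EY).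
Proof. apply sexpr_diffeo_full; cbn; auto; intros [x y]; cbn; split; ring. Qed.

Lemma sexpr_diffeo_scale_exp : sexpr_diffeo (fun _ => True) (fun _ => True)
  (EMul EX (EExp (ENeg EY))) (ENeg EY) (EMul EX (EExp (ENeg EY))) (ENeg EY).
Proof.
  apply sexpr_diffeo_full; cbn; auto; intros [x y]; cbn; split; try ring;
    rewrite Rmult_assoc, <- exp_plus; replace (-1 * y + -1 * (-1 * y)) with 0 by ring;
    rewrite exp_0; ring.
Qed.

Lemma sexpr_diffeo_exp (c : R) :
  sexpr_diffeo (fun _ => True) (fun q => eval (EAdd EX (EMul (ECst c) (EMul EY EY))) q < 0)
    (EAdd (ENeg (EExp (ENeg EX))) (EMul (ECst (- c)) (EMul EY EY))) EY
    (ENeg (ELn (ENeg (EAdd EX (EMul (ECst c) (EMul EY EY)))))) EY.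
Proof.
  split.
  - apply is_open_full.
  - apply is_open_eval_neg. intros; cbn; auto.
  - exists (0, 0); exact I.
  - intros; cbn; auto.
  - intros [u v] H; cbn in *; repeat split; lra.
  - intros [x y] _; cbn. pose proof (exp_pos (-1 * x)). lra.
  - auto.
  - intros [x y] _; cbn. split; [|reflexivity].
    replace (-1 * (-1 * exp (-1 * x) + - c * (y * y) + c * (y * y))) with (exp (-1 * x)) by ring.
    rewrite ln_exp. ring.
  - intros [u v] H; cbn in *. split; [|reflexivity].
    replace (-1 * (-1 * ln (-1 * (u + c * (v * v))))) with (ln (-1 * (u + c * (v * v)))) by ring.
    rewrite exp_ln by lra. ring.
Qed.

Lemma sexpr_diffeo_exp_skew :
  sexpr_diffeo (fun _ => True) (fun q => eval EX q < 0)
    (ENeg (EExp (ENeg (EAdd EX EY)))) (ENeg EY) (EAdd EY (ENeg (ELn (ENeg EX)))) (ENeg EY).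
Proof.
  split.
  - apply is_open_full.
  - apply is_open_eval_neg. intros; cbn; auto.
  - exists (0, 0); exact I.
  - intros; cbn; auto.
  - intros [u v] H; cbn in *; repeat split; lra.
  - intros [x y] _; cbn. pose proof (exp_pos (-1 * (x + y))). lra.
  - auto.
  - intros [x y] _; cbn. split; [|ring].
    replace (-1 * (-1 * exp (-1 * (x + y)))) with (exp (-1 * (x + y))) by ring.
    rewrite ln_exp. ring.
  - intros [u v] H; cbn in *. split; [|ring].
    replace (-1 * (v + -1 * ln (-1 * u) + -1 * v)) with (ln (-1 * u)) by ring.
    rewrite exp_ln by lra. ring.
Qed.

Lemma affinely_equiv_refl (G : conn) : affinely_equiv G G.
Proof. apply (affinely_equiv_of_sexpr sexpr_diffeo_id). solve_pullback. Qed.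

Lemma Gamma51_flip (c : R) : affinely_equiv (Gamma51 (- c)) (Gamma51 c).
Proof. apply (affinely_equiv_of_sexpr sexpr_diffeo_flip_y). solve_pullback. Qed.

Lemma Gamma41_Gamma41 (c c' : R) : affinely_equiv (Gamma41 c) (Gamma41 c').
Proof. apply (affinely_equiv_of_sexpr (sexpr_diffeo_shear ((c - c') / 2))). solve_pullback. Qed.

Lemma Gamma11_Gamma41 (c : R) : affinely_equiv Gamma11 (Gamma41 c).
Proof. apply (affinely_equiv_of_sexpr (sexpr_diffeo_exp (c / 2))). solve_pullback. Qed.

Lemma Gamma41_Gamma11 (c : R) : affinely_equiv (Gamma41 c) Gamma11.
Proof.
  apply (affinely_equiv_of_sexpr (sexpr_diffeo_sym (sexpr_diffeo_exp (c / 2)))). solve_pullback.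
Qed.

Lemma Gamma21_flip (c : R) : affinely_equiv (Gamma21 (-1 - c)) (Gamma21 c).
Proof. apply (affinely_equiv_of_sexpr sexpr_diffeo_skew). solve_pullback. Qed.

Lemma Gamma31_flip (c : R) : affinely_equiv (Gamma31 (-1 - c)) (Gamma31 c).
Proof. apply (affinely_equiv_of_sexpr sexpr_diffeo_scale_exp). solve_pullback. Qed.

Lemma Gamma21_Gamma31 (c : R) : affinely_equiv (Gamma21 c) (Gamma31 c).
Proof. apply (affinely_equiv_of_sexpr (sexpr_diffeo_exp 0)). solve_pullback. Qed.

Lemma Gamma31_Gamma21 (c : R) : affinely_equiv (Gamma31 c) (Gamma21 c).
Proof. apply (affinely_equiv_of_sexpr (sexpr_diffeo_sym (sexpr_diffeo_exp 0))). solve_pullback. Qed.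

Lemma Gamma21_Gamma31_flip (c : R) : affinely_equiv (Gamma21 (-1 - c)) (Gamma31 c).
Proof. apply (affinely_equiv_of_sexpr sexpr_diffeo_exp_skew). solve_pullback. Qed.

Lemma Gamma31_Gamma21_flip (c : R) : affinely_equiv (Gamma31 (-1 - c)) (Gamma21 c).
Proof.
  apply (affinely_equiv_of_sexpr (sexpr_diffeo_sym sexpr_diffeo_exp_skew)). solve_pullback.
Qed.

Lemma label_equiv_sufficient (l m : label) :
  equiv_cond l m -> affinely_equiv (conn_of l) (conn_of m).
Proof.
  intros [[H1 H2] | [[c [ct [H1 [H2 [-> | ->]]]]] | [c [ct [-> [-> [-> | ->]]]]]]].
  - destruct H1 as [-> | [c ->]], H2 as [-> | [c' ->]]; cbn.
    + apply affinely_equiv_refl.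
    + apply Gamma11_Gamma41.
    + apply Gamma41_Gamma11.
    + apply Gamma41_Gamma41.
  - destruct H1 as [-> | ->], H2 as [-> | ->]; cbn.
    + apply affinely_equiv_refl.
    + apply Gamma21_Gamma31.
    + apply Gamma31_Gamma21.
    + apply affinely_equiv_refl.
  - destruct H1 as [-> | ->], H2 as [-> | ->]; cbn.
    + apply Gamma21_flip.
    + apply Gamma21_Gamma31_flip.
    + apply Gamma31_Gamma21_flip.
    + apply Gamma31_flip.
  - apply affinely_equiv_refl.
  - apply Gamma51_flip.
Qed.

Theorem theorem3p7 (l m : label) :
  admissible l -> admissible m ->
  (affinely_equiv (conn_of l) (conn_of m) <-> equiv_cond l m).
Proof.
  intros Hl Hm. split.
  - exact (label_equiv_necessary l m Hl Hm).
  - exact (label_equiv_sufficient l m).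
Qed.
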